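(* Let $t$ be a positive integer, $\mathbf v$ a good vector with respect to $t$, and $n=4t+1$ if $|\mathbf v|=2t$, $n=4t+2$ if $|\mathbf v|=2t+1$. Then the code of Construction C built from $\mathbf v$ is an $\bigl(n,(t+1)n,k,n\bigr)$-BAC over $\mathbb{F}_q$ with $k=\bigl\lfloor(\sqrt{t+\tfrac14}+\tfrac12)^2\bigr\rfloor$.
   Context: Fix a finite field $\mathbb{F}_q$. Good vector: for a positive integer $t$, $\mathbf v=(v_1,\dots,v_{2t})\in[t]^{2t}$ or $\mathbf v\in\{0,\dots,t\}^{2t+1}$ is good w.r.t. $t$ if every $j\in[t]$ appears exactly twice in $\mathbf v$ and whenever $v_i=v_{i'}=j\in[t]$ with $i<i'$ then $i'-i=j$; for $j\in[t]$ let $j(\mathbf v)=\max\{i:v_i=j\}$. Construction C: indices modulo $n$ with representatives in $[n]$; for $\mathbf x\in\mathbb{F}_q^n$, $i\in[n]$, $j\in[t]$ put $y_{i,j}=x_{i-t-j(\mathbf v)}+x_{i-t-j(\mathbf v)+j}$ and $\mathcal C(\mathbf x)=(\mathbf c_1,\dots,\mathbf c_n)$ with $\mathbf c_i=(x_i,y_{i,1},\dots,y_{i,t})$. An $(n,N,k,m)$-batch array code (BAC) over $\mathbb{F}_q$ is an $\mathbb{F}_q$-linear map $\mathbf x\mapsto(\mathbf c_1,\dots,\mathbf c_m)$ with buckets $\mathbf c_\ell\in\mathbb{F}_q^{N_\ell}$, $N_\ell\ge1$, $\sum_\ell N_\ell=N$, such that for every multiset $\{\{i_1,\dots,i_k\}\}$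 of elements of $[n]$ there is a partition of $[m]$ into $k$ sets $R_1,\dots,R_k$ such that for each $j\in[k]$, $x_{i_j}$ is an $\mathbb{F}_q$-linear combination of values $f_\ell(\mathbf c_\ell)$, $\ell\in R_j$, for some linear functionals $f_\ell$ (independent of $\mathbf x$). *)

From HB Require Import structures.
From mathcomp Require Import all_boot all_order all_algebra all_field.
Set Implicit Arguments. Unset Strict Implicit. Unset Printing Implicit Defensive.
Import Order.TTheory GRing.Theory Num.Theory.
Local Open Scope ring_scope.

(* Good vector w.r.t. t.  v is a list; positions are 1-based in the paper,
   0-based here (nth 0 v i is v_{i+1}); differences of positions agree. *)
Definition good (t : nat) (v : seq nat) : Prop :=
  ((size v = (2 * t)%N /\ forall i, (i < size v)%N -> (1 <= nth 0%N v i <= t)%N)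
   \/ (size v = (2 * t).+1 /\ forall i, (i < size v)%N -> (nth 0%N v i <= t)%N))
  /\ (forall j, (1 <= j <= t)%N -> count_mem j v = 2%N)
  /\ (forall i i' j, (i < i')%N -> (i' < size v)%N -> (1 <= j <= t)%N ->
        nth 0%N v i = j -> nth 0%N v i' = j -> (i' - i)%N = j).

Definition jpos (v : seq nat) (j : nat) : nat :=
  \max_(i < size v | nth 0%N v i == j) i.+1.

Lemma shift_proof n (i : 'I_n) (d : int) : (`|((i%:Z + d) %% n%:Z)%Z|%N < n)%N.
Proof.
have n0 : (0 < n)%N by apply: leq_ltn_trans (ltn_ord i).
have h0 : (0 <= (i%:Z + d) %% n%:Z)%Z by rewrite modz_ge0 // lt0n_neq0.
rewrite -ltz_nat gez0_abs //; exact: ltz_pmod.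
Qed.

Definition shift n (i : 'I_n) (d : int) : 'I_n := Ordinal (shift_proof i d).

(* Construction C (0-based: bucket i : 'I_n is c_{i+1}, x 0 i is x_{i+1};
   component 0 of the bucket is x_i, component j in 1..t is y_{i,j}). *)
Definition constrC (F : fieldType) (t : nat) (v : seq nat) (n : nat)
    (x : 'rV[F]_n) (i : 'I_n) : 'rV[F]_(t.+1) :=
  \row_(j < t.+1)
    if j == 0%N :> nat then x 0 i
    else x 0 (shift i (- (t%:Z + (jpos v j)%:Z)))
         + x 0 (shift i (- (t%:Z + (jpos v j)%:Z) + (j : nat)%:Z)).

(* (n, N, k, m)-batch array code with bucket sizes Nl; the requested
   multiset {{i_1..i_k}} is given as a k-tuple req; a partition of the
   m buckets into k parts R_1..R_k is given by R : 'I_m -> 'I_k; linear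
   functional f_l on bucket l is c |-> sum_u f l 0 u * c 0 u. *)
Definition is_BAC (F : fieldType) (n N k m : nat) (Nl : 'I_m -> nat)
    (enc : 'rV[F]_n -> forall l : 'I_m, 'rV[F]_(Nl l)) : Prop :=
  (forall (a : F) x y l, enc (a *: x + y) l = a *: enc x l + enc y l)
  /\ (forall l, (0 < Nl l)%N)
  /\ (\sum_(l < m) Nl l)%N = N
  /\ forall req : 'I_k -> 'I_n,
       exists R : 'I_m -> 'I_k,
       exists f : forall l : 'I_m, 'rV[F]_(Nl l),
       forall (j : 'I_k) (x : 'rV[F]_n),
         x 0 (req j) = \sum_(l < m | R l == j) \sum_(u < Nl l) f l 0 u * enc x l 0 u.

Definition kval (t : nat) : nat :=
  `|Num.floor ((sqrtC (t%:R + 4%:R^-1) + 2%:R^-1) ^+ 2 : algC)|%N.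

Definition nC (t : nat) (v : seq nat) : nat :=
  if size v == (2 * t)%N then (4 * t + 1)%N else (4 * t + 2)%N.

From HB Require Import structures.
From mathcomp Require Import all_boot all_order all_algebra all_field.
From mathcomp Require Import zify ring.
Set Implicit Arguments. Unset Strict Implicit. Unset Printing Implicit Defensive.
Import GRing.Theory Num.Theory.

(* Item x_a is stored in bucket a, and it can also be recovered from two other
   buckets.  For a value j of the good vector v and one of its two occurrences,
   the j-th y-component of the bucket at offset t + (position of the occurrence)
   reads x_a + x_(a+j) for the last occurrence and x_(a-j) + x_a for the first,
   and the bucket at offset j, resp. -j, supplies the other summand.  These 2t
   pairs of buckets are pairwise disjoint and avoid a, because the 2t positions
   of v are distinct and the y-offsets lie strictly between the x-offsets.
   For a request with s distinct values, the most frequent one of multiplicity m,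
   one copy of each value is read directly and the remaining copies are served
   greedily, copies of the most frequent value last.  Every bucket already in use
   blocks at most one pair of the current item, and the budget
   2k <= 2t + s + m, a consequence of k <= s m and of the choice of k,
   always leaves a free pair. *)

Section Kval.
Local Open Scope ring_scope.
Variable t : nat.

Let x : algC := sqrtC (t%:R + 4^-1).
Let y : algC := t%:R + 2^-1 + x.

Let x_ge0 : 0 <= x. Proof. by rewrite sqrtC_ge0 addr_ge0 // invr_ge0. Qed.

Let x_sqr : x ^+ 2 = t%:R + 4^-1. Proof. by rewrite sqrtCK. Qed.

Let y_ge0 : 0 <= y. Proof. by rewrite !addr_ge0 // invr_ge0. Qed.

Let kvalE : Posz (kval t) = Num.floor y.
Proof.
rewrite /kval -/x.
have -> : (x + 2^-1) ^+ 2 = y by rewrite sqrrD x_sqr /y; field.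
by rewrite gez0_abs // real_floor_ge0 ?ger0_real.
Qed.

Lemma ltn_kval : (t < kval t)%N.
Proof.
rewrite -ltz_nat kvalE.
rewrite -lezD1 real_floor_ge_int ?ger0_real // /y rmorphD /= -addrA lerD2l.
have x_ge : 2^-1 <= x.
  rewrite -(ler_pXn2r (_ : 0 < 2)%N) ?nnegrE ?invr_ge0 // x_sqr.
  have -> : (2^-1 : algC) ^+ 2 = 4^-1 by rewrite expr2 -invfM -natrM.
  by rewrite lerDr.
have -> : 1%:~R = 2^-1 + 2^-1 :> algC by field.
by rewrite lerD2l.
Qed.

Lemma kval_sqr_le : ((2 * (kval t - t) - 1) ^ 2 <= 4 * t + 1)%N.
Proof.
have ky : (kval t)%:R <= y.
  by rewrite -[_%:R]/((Posz (kval t))%:~R) kvalE real_floor_le ?ger0_real.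
have [a kE] : exists a, kval t = (t + a.+1)%N.
  by have := ltn_kval; move: (kval t) => k tk; exists (k - t).-1; lia.
rewrite kE (_ : (2 * (t + a.+1 - t) - 1 = 2 * a + 1)%N); last by lia.
have a_le : (2 * a + 1)%N%:R <= 2 * x.
  have -> : (2 * a + 1)%N%:R = 2 * (a%:R + 2^-1) :> algC by rewrite natrD natrM; field.
  rewrite ler_pM2l ?ltr0n //.
  move: ky; rewrite kE natrD -natr1 /y -addrA lerD2l.
  have -> : a%:R + 1 = 2^-1 + (a%:R + 2^-1) :> algC by field.
  by rewrite lerD2l.
move: a_le; rewrite -(ler_pXn2r (_ : 0 < 2)%N) ?nnegrE ?mulr_ge0 ?ler0n //.
rewrite exprMn x_sqr -natrX.
have -> : 2 ^+ 2 * (t%:R + 4^-1) = (4 * t + 1)%N%:R :> algC.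
  by rewrite natrD natrM; field.
by rewrite ler_nat.
Qed.
End Kval.

Lemma sqr_le_budget (t k s m : nat) :
  (2 * (k - t) - 1) ^ 2 <= 4 * t + 1 -> k <= s * m -> 2 * k <= 2 * t + s + m.
Proof.
move=> hk ksm; rewrite leqNgt; apply/negP => lt.
have hsm : s + m <= 2 * (k - t) - 1 by lia.
have : (s + m) ^ 2 <= 4 * t + 1 by apply: leq_trans hk; rewrite leq_exp2r.
have [amgm _] := nat_AGM2 s m; lia.
Qed.

Lemma leq_card_bigcup (I : Type) (T : finType) (s : seq I) (p : pred I)
    (F : I -> {set T}) :
  #|\bigcup_(i <- s | p i) F i| <= \sum_(i <- s | p i) #|F i|.
Proof.
apply: (big_ind2 (fun (A : {set T}) n => #|A| <= n)); first by rewrite cards0.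
  by move=> A n B m hA hB; apply: leq_trans (leq_card_setU A B) (leq_add hA hB).
by [].
Qed.

Lemma card_le_image_mul_fiber (I T : finType) (f : I -> T) (m : nat) :
  (forall a, #|[set i | f i == a]| <= m) -> #|I| <= #|[set f i | i : I]| * m.
Proof.
move=> hf; rewrite -cardsT -sum1_card.
rewrite (partition_big f (mem [set f i | i : I])) /=; last by move=> i _; rewrite imset_f.
rewrite -sum_nat_const; apply: leq_sum => a _; apply: leq_trans (hf a).
by rewrite -sum1_card; apply/eq_leq/eq_bigl => i; rewrite !inE.
Qed.

Section Allocation.
Variables (T P : finType) (rec : T -> P -> {set T}).
Hypothesis card_rec : forall a d, #|rec a d| <= 2.
Hypothesis notin_rec : forall a d, a \notin rec a d.
Hypothesis rec_disjoint : forall a d d', d != d' -> [disjoint rec a d & rec a d'].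

Lemma card_meeting_rec (a : T) (S : {set T}) :
  #|[set d | ~~ [disjoint rec a d & S]]| <= #|S :\ a|.
Proof.
pose h d := odflt a [pick b in rec a d :&: S].
have hP d : ~~ [disjoint rec a d & S] -> h d \in rec a d :&: S.
  rewrite -setI_eq0 => /set0Pn [b bRS]; rewrite /h.
  by case: pickP => [//|/(_ b)]; rewrite bRS.
rewrite -(card_in_imset (f := h)).
  apply/subset_leq_card/subsetP => b /imsetP [d]; rewrite inE => /hP.
  rewrite !inE => /andP [hR hS] ->; rewrite hS andbT.
  by apply: (contraNneq _ (notin_rec a d)) => e; rewrite -{1}e.
move=> d d'; rewrite !inE => /hP + /hP; rewrite !inE => /andP [hd _] /andP [hd' _] e.
apply/eqP; apply: contraTT isT => ne; have := rec_disjoint a ne.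
by rewrite -setI_eq0 => /eqP /setP /(_ (h d)); rewrite !inE hd e hd'.
Qed.

(* Each bucket of another item meets at most one recovery set of [a], while a
   recovery set of [a] itself meets only its own; so at most
   [#|B| - 1 + size used + count (fun u => u.1 != a) used] options are blocked. *)
Lemma exists_free_rec (B : {set T}) (a : T) (used : seq (T * P)) :
  a \in B -> #|B| + size used + count (fun u => u.1 != a) used <= #|P| ->
  exists d, [disjoint rec a d & B] && all (fun u => [disjoint rec a d & rec u.1 u.2]) used.
Proof.
move=> aB hcount.
set W := \bigcup_(u <- used | u.1 != a) rec u.1 u.2.
set own := [set u.2 | u in [seq u <- used | u.1 == a]].
set blocked := [set d | ~~ [disjoint rec a d & B :|: W]] :|: own.
have card_blocked : #|blocked| < #|P|.
  have hW : #|W| <= 2 * count (fun u => u.1 != a) used.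
    apply: leq_trans (leq_card_bigcup _ _ _) _.
    by rewrite -sum1_count big_distrr /= leq_sum.
  have hown : #|own| <= count (fun u => u.1 == a) used.
    by rewrite -size_filter; apply: leq_trans (leq_imset_card _ _) (card_size _).
  have hBW : #|(B :|: W) :\ a| <= #|B :\ a| + #|W|.
    rewrite setDUl; apply: leq_trans (leq_card_setU _ _) (leq_add _ _) => //.
    exact/subset_leq_card/subsetDl.
  have hsize : count (fun u => u.1 == a) used + count (fun u => u.1 != a) used = size used.
    exact: count_predC.
  have := cardsD1 a B; rewrite aB /blocked.
  have := card_meeting_rec a (B :|: W).
  have := (leq_card_setU [set d | ~~ [disjoint rec a d & B :|: W]] own).1.
  lia.
have [d] : exists d, d \notin blocked.
  apply/existsP; rewrite -negb_forall; apply: contraTN card_blocked => /forallP inB.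
  by rewrite -leqNgt -cardsT subset_leq_card //; apply/subsetP => d _; rewrite inB.
rewrite !inE negb_or negbK => /andP [dBW dNown]; exists d; apply/andP; split.
  by apply: disjointWr dBW; apply: subsetUl.
apply/allP => u uused; case: (eqVneq u.1 a) => [ua|uNa].
  rewrite -ua rec_disjoint //; apply: contraNneq dNown => ->.
  by apply/imsetP; exists u; rewrite // mem_filter ua eqxx.
apply: disjointWr dBW; apply: subset_trans (subsetUr _ _).
by rewrite /W (big_rem u) //= uNa subsetUl.
Qed.

Variables (I : finType) (req : I -> T).

Lemma greedy_allocation (p0 : P) (B : {set T}) (rs : seq I) :
  uniq rs -> {in rs, forall j, req j \in B} ->
  (forall pre j post, rs = pre ++ j :: post ->
     #|B| + size pre + count (fun j' => req j' != req j) pre <= #|P|) ->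
  exists g : I -> P,
    {in rs, forall j, [disjoint rec (req j) (g j) & B]} /\
    {in rs &, forall j j', j != j' -> [disjoint rec (req j) (g j) & rec (req j') (g j')]}.
Proof.
elim/last_ind: rs => [|rs j IH]; first by exists (fun=> p0).
rewrite rcons_uniq => /andP [jNrs rs_uniq] rsB hcount.
have [g [gB gdisj]] : exists g : I -> P,
    {in rs, forall j, [disjoint rec (req j) (g j) & B]} /\
    {in rs &, forall j j', j != j' -> [disjoint rec (req j) (g j) & rec (req j') (g j')]}.
  apply: IH => // [j' j'rs|pre j' post e].
    by apply: rsB; rewrite mem_rcons inE j'rs orbT.
  by apply: (hcount pre j' (rcons post j)); rewrite e -!cats1 -catA.
have [d /andP [dB /allP dfree]] : exists d, [disjoint rec (req j) d & B] &&
    all (fun u => [disjoint rec (req j) d & rec u.1 u.2]) [seq (req j', g j') | j' <- rs].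
  apply: exists_free_rec; first by apply: rsB; rewrite mem_rcons mem_head.
  by rewrite size_map count_map; apply: (hcount rs j [::]); rewrite cats1.
have dfree' j' : j' \in rs -> [disjoint rec (req j) d & rec (req j') (g j')].
  by move=> j'rs; apply: (dfree (req j', g j')); apply: map_f.
exists (fun j' => if j' == j then d else g j'); split.
  move=> j'; rewrite mem_rcons inE; case: eqP => [-> _ //|_ /= j'rs]; exact: gB.
move=> j1 j2; rewrite !mem_rcons !inE.
case: eqP => [->|_] /= j1rs; case: eqP => [->|_] /= j2rs; rewrite ?eqxx // => ne.
- exact: dfree'.
- by rewrite disjoint_sym; apply: dfree'.
- exact: gdisj.
Qed.

Definition recovery_set (c : I -> option P) (j : I) : {set T} :=
  if c j is Some d then rec (req j) d else [set req j].

Definition head_of (j : I) : I := odflt j [pick j' | req j' == req j].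

Definition heads : {set I} := [set j | head_of j == j].

Lemma req_head_of j : req (head_of j) = req j.
Proof. by rewrite /head_of; case: pickP => [j' /eqP|]. Qed.

Lemma head_of_eq j j' : req j = req j' -> head_of j = head_of j'.
Proof. by rewrite /head_of => ->; case: pickP => [//|/(_ j')]; rewrite eqxx. Qed.

Lemma head_of_in_heads j : head_of j \in heads.
Proof. by rewrite inE (head_of_eq (req_head_of j)). Qed.

Lemma heads_req_inj : {in heads &, injective req}.
Proof.
move=> j j'; rewrite !inE => /eqP hj /eqP hj' /head_of_eq.
by rewrite hj hj'.
Qed.

Lemma card_heads : #|heads| = #|[set req j | j : I]|.
Proof.
rewrite -(card_in_imset heads_req_inj); apply: eq_card => a.
apply/imsetP/imsetP => [[j _ ->]|[j _ ->]]; first by exists j.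
by exists (head_of j); rewrite ?head_of_in_heads ?req_head_of.
Qed.

Section Schedule.
Variable astar : T.

Let fiber := [set j | req j == astar].
Let O := ~: heads :\: fiber.
Let X := ~: heads :&: fiber.

Lemma card_heads_O_X : #|heads| + #|O| + #|X| = #|I|.
Proof. by rewrite -addnA [#|O| + _]addnC cardsID cardsC. Qed.

Lemma card_fiber_le : #|fiber| <= #|X|.+1.
Proof.
rewrite -(cardsID heads fiber) [fiber :\: _]setDE [fiber :&: ~: _]setIC addnC -addn1 leq_add2l.
apply/card_le1_eqP => j j' /setIP [fj hj] /setIP [fj' hj'].
by apply: heads_req_inj; rewrite // !inE in fj fj'; rewrite (eqP fj) (eqP fj').
Qed.

Let schedule := enum O ++ enum X.

Lemma schedule_uniq : uniq schedule.
Proof.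
rewrite cat_uniq !enum_uniq andbT /=; apply/hasPn => j.
by rewrite !mem_enum => /setIP [_ fj]; apply/negP => /setDP [_]; rewrite fj.
Qed.

Lemma mem_schedule j : (j \in schedule) = (j \notin heads).
Proof. by rewrite mem_cat !mem_enum orbC -in_setU setID in_setC. Qed.

Lemma schedule_count pre j post : schedule = pre ++ j :: post ->
  size pre + count (fun j' => req j' != req j) pre < 2 * #|O| + #|X|.
Proof.
move=> e; have jNpre : j \notin pre.
  by move: schedule_uniq; rewrite e cat_uniq => /and3P [_ /hasPn /(_ j (mem_head _ _))].
have size_pre : size pre = index j schedule by rewrite e index_cat (negbTE jNpre) /= eqxx addn0.
have count_pre := count_size (fun j' => req j' != req j) pre.
have jrs : j \in schedule by rewrite e mem_cat mem_head orbT.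
case: (eqVneq (req j) astar) => ja.
  have countX : count (fun j' => req j' != astar) (enum X) = 0.
    apply/eqP; rewrite eqn0Ngt -has_count; apply/hasPn => j'.
    by rewrite mem_enum => /setIP [_]; rewrite inE negbK.
  have := count_size (fun j' => req j' != astar) (enum O).
  have : size pre < size schedule by rewrite size_pre index_mem.
  have := congr1 (count (fun j' => req j' != astar)) e.
  rewrite ja /schedule !count_cat countX size_cat -!cardE.
  lia.
have : size pre < #|O|.
  rewrite size_pre index_cat cardE; case: ifP => [|jNO]; first by rewrite index_mem.
  by move: jrs; rewrite mem_cat jNO /= mem_enum => /setIP [_]; rewrite inE (negbTE ja).
lia.
Qed.

End Schedule.

Lemma allocation (p0 : P) :
  (forall s m, #|I| <= s * m -> 2 * #|I| <= #|P| + s + m) ->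
  exists c : I -> option P,
    forall j j', j != j' -> [disjoint recovery_set c j & recovery_set c j'].
Proof.
move=> hbudget; have [j0 _|I0] := pickP (fun _ : I => true); last first.
  by exists (fun=> None) => j; have := I0 j.
pose fiber a := [set j | req j == a].
pose astar := req [arg max_(j > j0) #|fiber (req j)|].
have max_fiber a : #|fiber a| <= #|fiber astar|.
  case: (boolP [exists j, req j == a]) => [/existsP [j /eqP <-]|].
    by rewrite /astar; case: arg_maxnP => // i _; apply.
  rewrite negb_exists => /forallP Na; rewrite (_ : fiber a = set0) ?cards0 //.
  by apply/setP => j; rewrite !inE (negbTE (Na j)).
have := hbudget _ _ (card_le_image_mul_fiber max_fiber).
rewrite -card_heads -(card_heads_O_X astar) /fiber => budget.
have fiber_le := card_fiber_le astar.
have [||g [gB gdisj]] := greedy_allocation p0 (B := [set req j | j : I]) (schedule_uniq astar).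
- by move=> j _; apply: imset_f.
- move=> pre j post /schedule_count; rewrite -card_heads; lia.
exists (fun j => if j \in heads then None else Some (g j)) => j j' ne.
rewrite /recovery_set; case: ifP => hj; case: ifP => hj'.
- rewrite disjoints1 in_set1; apply: contra ne => /eqP e.
  by apply/eqP/heads_req_inj.
- rewrite disjoints1 (disjointFl (gB j' _)) ?imset_f //.
  by rewrite mem_schedule hj'.
- rewrite disjoint_sym disjoints1 (disjointFl (gB j _)) ?imset_f //.
  by rewrite mem_schedule hj.
- by apply: gdisj; rewrite // mem_schedule ?hj ?hj'.
Qed.

End Allocation.

Lemma sum_delta_mul (R : pzRingType) (N : nat) (c : 'I_N) (g : 'I_N -> R) :
  (\sum_(u < N) (delta_mx 0 c : 'rV[R]_N) 0 u * g u = g c)%R.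
Proof.
rewrite (bigD1 c) //= mxE !eqxx mul1r big1 ?addr0 // => u /negbTE uc.
by rewrite mxE uc mul0r.
Qed.

Lemma batch_recovery (F : fieldType) (n m k : nat) (Nl : 'I_m -> nat)
    (enc : 'rV[F]_n -> forall l : 'I_m, 'rV[F]_(Nl l)) (req : 'I_k -> 'I_n)
    (U : 'I_k -> {set 'I_m}) (dec : 'I_k -> forall l : 'I_m, 'rV[F]_(Nl l)) :
  0 < k -> (forall j j', j != j' -> [disjoint U j & U j']) ->
  (forall j (x : 'rV[F]_n),
     x 0 (req j) = \sum_(l in U j) \sum_(u < Nl l) dec j l 0 u * enc x l 0 u)%R ->
  exists R : 'I_m -> 'I_k, exists f : forall l : 'I_m, 'rV[F]_(Nl l),
  forall j (x : 'rV[F]_n),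
    (x 0 (req j) = \sum_(l < m | R l == j) \sum_(u < Nl l) f l 0 u * enc x l 0 u)%R.
Proof.
move=> k_gt0 U_disj hdec.
pose owner l := [pick j | l \in U j].
have ownerE j l : l \in U j -> owner l = Some j.
  move=> lU; rewrite /owner; case: pickP => [j' lU'|/(_ j)]; last by rewrite lU.
  by congr Some; apply: contraTeq lU' => ne; rewrite (disjointFl (U_disj _ _ ne) lU).
exists (fun l => odflt (Ordinal k_gt0) (owner l)).
exists (fun l => if owner l is Some j then dec j l else 0%R) => j x.
rewrite hdec big_mkcond [RHS]big_mkcond; apply: eq_bigr => l _.
case: (boolP (l \in U j)) => lU; first by rewrite (ownerE j l lU) eqxx.
rewrite /owner; case: pickP => [j' lU' /=|_ /=].
  by case: eqP => // ej; rewrite -ej lU' in lU.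
by case: eqP => // _; rewrite big1 // => u _; rewrite mxE mul0r.
Qed.

Section Shift.
Variable n : nat.

Lemma shiftE (i : 'I_n) d : Posz (shift i d) = ((i%:Z + d) %% n%:Z)%Z.
Proof.
have n0 : (n%:Z != 0)%R by rewrite eqz_nat -lt0n; apply: leq_ltn_trans (ltn_ord i).
by rewrite /= gez0_abs // modz_ge0.
Qed.

Lemma shift0 (i : 'I_n) : shift i 0 = i.
Proof.
apply: val_inj; apply/eqP; rewrite -eqz_nat shiftE addr0 modz_small //.
by rewrite lez_nat ltz_nat ltn_ord.
Qed.

Lemma shiftD (i : 'I_n) d1 d2 : shift (shift i d1) d2 = shift i (d1 + d2)%R.
Proof.
apply: val_inj; apply/eqP; rewrite -eqz_nat shiftE [X in _ == X]shiftE.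
by rewrite shiftE modzDml addrA.
Qed.

Lemma eq_shift (i : 'I_n) d1 d2 : (d1 = d2 %[mod n%:Z])%Z -> shift i d1 = shift i d2.
Proof.
move=> e; apply: val_inj; apply/eqP; rewrite -eqz_nat !shiftE.
by rewrite -modzDmr e modzDmr.
Qed.

Lemma shift_nat_inj (i : 'I_n) (e1 e2 : nat) : e1 < n -> e2 < n ->
  shift i e1%:Z = shift i e2%:Z -> e1 = e2.
Proof.
move=> lt1 lt2 /(congr1 (fun j : 'I_n => Posz j)); rewrite !shiftE => /eqP.
by rewrite eqz_modDl !modz_small ?lez_nat ?ltz_nat // => /eqP [].
Qed.
End Shift.

Lemma good_jpos t v j : good t v -> 1 <= j <= t ->
  [/\ j < jpos v j, jpos v j <= size v,
      nth 0 v (jpos v j).-1 = j & nth 0 v ((jpos v j).-1 - j) = j].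
Proof.
move=> [_ [hcount hdist]] hj.
set A := [set i : 'I_(size v) | nth 0 v i == j].
have cardA : #|A| = 2.
  rewrite -(hcount j hj) -sum1_count (big_nth 0) big_mkord -sum1_card.
  by apply: eq_bigl => i; rewrite inE.
have [i0 i0A] : exists i0, i0 \in A by apply/set0Pn; rewrite -card_gt0 cardA.
rewrite /jpos (bigop.bigmax_eq_arg i0); last by rewrite inE in i0A.
case: arg_maxnP; first by rewrite inE in i0A.
move=> im /eqP him hmax.
have [i iA] : exists i, i \in A :\ im.
  by apply/set0Pn; rewrite -card_gt0; have := cardsD1 im A; rewrite cardA inE him eqxx; lia.
move: iA; rewrite !inE => /andP [iim /eqP hi].
have ltim : i < im by rewrite ltn_neqAle iim /=; have := hmax i; rewrite hi eqxx; apply.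
have := hdist i im j ltim (ltn_ord im) hj hi him.
by rewrite /= ltn_ord => e; split => //; [lia | rewrite (_ : im - j = i) //; lia].
Qed.

Section ConstructionC.
Variables (t : nat) (v : seq nat).
Hypothesis v_good : good t v.

Lemma nC_good : nC t v = size v + 2 * t + 1.
Proof.
rewrite /nC; case: v_good => [[[-> _]|[-> _]] _]; first by rewrite eqxx; lia.
by rewrite (_ : (2 * t).+1 == 2 * t = false); lia.
Qed.

Let n := nC t v.

Definition jval (d : 'I_t * bool) : nat := (d.1).+1.

(* The 1-based position of the last occurrence of [jval d] in [v] if [d.2],
   of the first one otherwise. *)
Definition occ d : nat := jpos v (jval d) - (if d.2 then 0 else jval d).

Definition yoff d : nat := t + occ d.

Definition xoff d : nat := if d.2 then jval d else n - jval d.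

Definition ybucket (a : 'I_n) d : 'I_n := shift a (yoff d)%:Z.

Definition xbucket (a : 'I_n) d : 'I_n := shift a (xoff d)%:Z.

Definition recC (a : 'I_n) d : {set 'I_n} := [set ybucket a d; xbucket a d].

Lemma card_recC a d : #|recC a d| <= 2.
Proof. by rewrite cards2; case: (_ != _). Qed.

Lemma jval_range d : 1 <= jval d <= t.
Proof. by rewrite /jval ltn_ord. Qed.

Lemma occ_spec d : 1 <= occ d <= size v /\ nth 0 v (occ d).-1 = jval d.
Proof.
have [lt_j le_size last_j first_j] := good_jpos v_good (jval_range d).
rewrite /occ; case: d.2; first by rewrite subn0 last_j; split => //; lia.
by rewrite (_ : (_ - _).-1 = (jpos v (jval d)).-1 - jval d); [split => //; lia | lia].
Qed.

Lemma occ_inj : injective occ.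
Proof.
move=> [j b] [j' b'] e.
have jj' : j = j'.
  have [_ nth_d] := occ_spec (j, b); have [_ nth_d'] := occ_spec (j', b').
  apply/ord_inj/succn_inj; rewrite -[j.+1]/(jval (j, b)) -[j'.+1]/(jval (j', b')).
  by rewrite -nth_d -nth_d' e.
subst j'; have [lt_j _ _ _] := good_jpos v_good (jval_range (j, b)).
by move: e lt_j; rewrite /occ /jval /=; case: b; case: b' => //= e; lia.
Qed.

Lemma yoff_range d : t < yoff d /\ yoff d + t < n.
Proof. by have [occ_range _] := occ_spec d; rewrite /n nC_good /yoff; lia. Qed.

Lemma xoff_range d : 0 < xoff d < n /\ (xoff d <= t \/ n - t <= xoff d).
Proof. by have := jval_range d; rewrite /xoff /n nC_good; case: d.2; lia. Qed.

Lemma xoff_inj : injective xoff.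
Proof.
move=> [j b] [j' b']; have := ltn_ord j; have := ltn_ord j'.
rewrite /xoff /n nC_good /jval /=.
case: b; case: b' => lt_j' lt_j e; try (exfalso; lia).
all: by congr pair; apply: ord_inj; lia.
Qed.

Lemma yoff_inj : injective yoff.
Proof. by move=> d d' /addnI /occ_inj. Qed.

Lemma yoff_neq_xoff d d' : yoff d != xoff d'.
Proof. by have := yoff_range d; have := xoff_range d'; lia. Qed.

Lemma ybucket_neq_xbucket a d : ybucket a d != xbucket a d.
Proof.
have := yoff_range d; have := xoff_range d => -[xr _] yr.
by apply: contra (yoff_neq_xoff d d) => /eqP /shift_nat_inj -> //; lia.
Qed.

Lemma notin_recC a d : a \notin recC a d.
Proof.
have := yoff_range d; have := xoff_range d => -[xr _] yr.
rewrite !inE -{1 3}(shift0 a); apply/norP; split; apply/negP => /eqP /shift_nat_inj; lia.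
Qed.

Lemma recC_meet_eq a d d' b : b \in recC a d -> b \in recC a d' -> d = d'.
Proof.
have := yoff_range d; have := xoff_range d => -[xr _] yr.
have := yoff_range d'; have := xoff_range d' => -[xr' _] yr'.
rewrite !inE /ybucket /xbucket => /orP [] /eqP -> /orP [] /eqP /shift_nat_inj e.
- by apply: yoff_inj; apply: e; lia.
- by move: (yoff_neq_xoff d d'); rewrite e //; lia.
- by move: (yoff_neq_xoff d' d); rewrite e //; lia.
- by apply: xoff_inj; apply: e; lia.
Qed.

Lemma recC_disjoint a d d' : d != d' -> [disjoint recC a d & recC a d'].
Proof.
move=> ne; rewrite -setI_eq0; apply/set0Pn => -[b]; rewrite inE => /andP [bd bd'].
by rewrite (recC_meet_eq bd bd') eqxx in ne.
Qed.

Definition jord (d : 'I_t * bool) : 'I_t.+1 := Ordinal (ltn_ord d.1 : jval d < t.+1).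

Lemma constrC_decode (F : fieldType) (x : 'rV[F]_n) a d :
  (constrC t v x (ybucket a d) 0 (jord d) - constrC t v x (xbucket a d) 0 0 = x 0 a)%R.
Proof.
have [lt_j _ _ _] := good_jpos v_good (jval_range d).
rewrite !mxE /= /ybucket /xbucket !shiftD /yoff /occ /xoff.
move: lt_j; rewrite /jval; case: d => [j []] /= lt_j.
  rewrite [X in (x _ (shift a X) + _)%R](_ : _ = 0%R); last by lia.
  rewrite [X in (_ + x _ (shift a X))%R](_ : _ = Posz j.+1); last by lia.
  by rewrite shift0 addrK.
rewrite [X in (_ + x _ (shift a X))%R](_ : _ = 0%R); last by lia.
rewrite [X in (x _ (shift a X) + _)%R](_ : _ = - Posz j.+1)%R; last by lia.
have lt_jn : j.+1 < n by rewrite /n nC_good; have := ltn_ord j; lia.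
rewrite shift0 (@eq_shift _ a (- Posz j.+1) (n - j.+1)%N); first by rewrite addrAC subrr add0r.
by rewrite (_ : Posz (n - j.+1) = n%:Z + - Posz j.+1)%R ?modzDl //; lia.
Qed.

Section Decoding.
Local Open Scope ring_scope.
Variables (F : fieldType) (k : nat) (req : 'I_k -> 'I_n) (c : 'I_k -> option ('I_t * bool)).

Definition decoderC j (l : 'I_n) : 'rV[F]_t.+1 :=
  if c j is Some d then
    if l == ybucket (req j) d then delta_mx 0 (jord d) else - delta_mx 0 0
  else delta_mx 0 0.

Lemma decoderC_correct j (x : 'rV[F]_n) :
  x 0 (req j) = \sum_(l in recovery_set recC req c j)
                  \sum_(u < t.+1) decoderC j l 0 u * constrC t v x l 0 u.
Proof.
rewrite /recovery_set /decoderC; case: (c j) => [d|]; last first.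
  by rewrite big_set1 sum_delta_mul mxE.
rewrite big_setU1 ?inE ?ybucket_neq_xbucket //= big_set1 eqxx eq_sym.
rewrite (negbTE (ybucket_neq_xbucket _ _)) sum_delta_mul.
under eq_bigr do rewrite mxE mulNr.
by rewrite sumrN sum_delta_mul constrC_decode.
Qed.
End Decoding.
End ConstructionC.

Lemma constrC_linear (F : fieldType) t v n (a : F) (x y : 'rV[F]_n) l :
  constrC t v (a *: x + y) l = (a *: constrC t v x l + constrC t v y l)%R.
Proof. by apply/rowP => u; rewrite !mxE; case: ifP => _; rewrite ?mxE //; ring. Qed.

Theorem corollary4p9 (F : finFieldType) (t : nat) (v : seq nat) :
  (0 < t)%N -> good t v ->
  @is_BAC F (nC t v) ((t + 1) * nC t v)%N (kval t) (nC t v)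
    (fun _ => t.+1) (@constrC F t v (nC t v)).
Proof.
move=> t_gt0 v_good; split; first exact: constrC_linear.
split; first by [].
split; first by rewrite big_const_ord iter_addn_0 addn1.
move=> req.
have budget s m : #|'I_(kval t)| <= s * m ->
    2 * #|'I_(kval t)| <= #|{: 'I_t * bool}| + s + m.
  by rewrite card_ord card_prod card_ord card_bool => /(sqr_le_budget (kval_sqr_le t)); lia.
have [c c_disj] := allocation (@card_recC t v) (notin_recC v_good) (recC_disjoint v_good)
  req (Ordinal t_gt0, true) budget.
have k_gt0 : 0 < kval t by apply: leq_ltn_trans (ltn_kval t).
exact: batch_recovery k_gt0 c_disj (decoderC_correct v_good req c).
Qed.
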